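(* Let $k_p, k_s, n_s$ be positive integers with $n_s \ge k_s$, and let $\epsilon_s \in [0,1)$. Define \[ \epsilon_p = \Pr\bigl(S < k_s\bigr), \qquad S \sim \mathrm{Binomial}(n_s, 1-\epsilon_s), \] i.e. $\epsilon_p = \sum_{j=n_s-k_s+1}^{n_s}\binom{n_s}{j}\epsilon_s^{\,j}(1-\epsilon_s)^{n_s-j}$. Let \[ \mathbb{E}\bigl[T^{\mathrm{IIR}}\bigr] = \frac{k_p\, k_s}{1-\epsilon_s}, \qquad \mathbb{E}\bigl[T^{\mathrm{FR}}\bigr] = \frac{k_p\, n_s}{1-\epsilon_p}. \] Then $\mathbb{E}\bigl[T^{\mathrm{FR}}\bigr] \ge \mathbb{E}\bigl[T^{\mathrm{IIR}}\bigr]$.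
   Context: Point-to-point transmission model: a chunk consists of $k_p$ packets, each consisting of $k_s$ symbols. The physical channel is a memoryless symbol erasure channel that erases each transmitted symbol independently with probability $\epsilon_s$. A packet can be decoded once any $k_s$ of its transmitted coded symbols are received, and a chunk once any $k_p$ of its coded packets are received. In the Infinite Incremental Redundancy (IIR) scheme, coded symbols of a packet are sent until $k_s$ are received (no packet erasures). The number of channel uses $T^{\mathrm{IIR}}$ to decode the chunk is then negative binomial with parameters $(k_p k_s, 1-\epsilon_s)$, so its mean is $k_p k_s/(1-\epsilon_s)$. In the Fixed Redundancy (FR) scheme, each packet is sent using exactly $n_s$ coded symbols and is erased with probability $\epsilon_p$ (the probability that fewer than $k_s$ of the $n_s$ symbols are received). Coded packets are sent ratelessly until $k_p$ packets are received. The number of channel uses $T^{\mathrm{FR}}$ therefore has mean $k_p n_s/(1-\epsilon_p)$. Note that $\epsilon_p<1$ because $\epsilon_s<1$. *)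

From mathcomp Require Import all_boot all_order all_algebra.
Set Implicit Arguments. Unset Strict Implicit. Unset Printing Implicit Defensive.
Import Order.TTheory GRing.Theory Num.Theory.
Local Open Scope ring_scope.

Definition eps_p {R : realFieldType} (n_s k_s : nat) (eps_s : R) : R :=
  \sum_((n_s - k_s).+1 <= j < n_s.+1)
     ('C(n_s, j))%:R * eps_s ^+ j * (1 - eps_s) ^+ (n_s - j).

Definition ET_IIR {R : realFieldType} (k_p k_s : nat) (eps_s : R) : R :=
  (k_p * k_s)%:R / (1 - eps_s).

Definition ET_FR {R : realFieldType} (k_p k_s n_s : nat) (eps_s : R) : R :=
  (k_p * n_s)%:R / (1 - eps_p n_s k_s eps_s).

From mathcomp Require Import all_boot all_order all_algebra.
From mathcomp Require Import ring zify.
Import Order.TTheory GRing.Theory Num.Theory.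
Local Open Scope ring_scope.

(* Let J ~ Binomial(n_s, eps_s) count the erased symbols of a packet, so that
   S = n_s - J and 1 - eps_p = Pr(S >= k_s).  Markov's inequality for S gives
   k_s * (1 - eps_p) <= E[S] = n_s * (1 - eps_s), and dividing by the positive
   quantities (1 - eps_s) and (1 - eps_p) is exactly the claim. *)

Definition binomial_pmf {R : comNzRingType} (n : nat) (e : R) (j : nat) : R :=
  ('C(n, j))%:R * e ^+ j * (1 - e) ^+ (n - j).

Lemma binomial_pmf_ge0 (R : numDomainType) (n j : nat) (e : R) :
  0 <= e <= 1 -> 0 <= binomial_pmf n e j.
Proof.
by case/andP=> e_ge0 e_le1; rewrite !mulr_ge0 ?exprn_ge0 ?ler0n ?subr_ge0.
Qed.

Lemma sum_binomial_pmf (R : comNzRingType) (n : nat) (e : R) :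
  \sum_(0 <= j < n.+1) binomial_pmf n e j = 1.
Proof.
transitivity ((1 - e + e) ^+ n); last by rewrite subrK expr1n.
rewrite exprDn big_mkord; apply: eq_bigr => j _.
by rewrite /binomial_pmf -mulr_natl; ring.
Qed.

Lemma binomial_mean_successes (R : comNzRingType) (n : nat) (e : R) :
  \sum_(0 <= j < n.+1) (n - j)%:R * binomial_pmf n e j = n%:R * (1 - e).
Proof.
case: n => [|m]; first by rewrite big_nat1 subnn !mul0r.
rewrite big_nat_recr //= subnn mul0r addr0.
rewrite -[RHS]mulr1 -[X in _ = _ * X](sum_binomial_pmf _ m e) mulr_sumr !big_mkord.
apply: eq_bigr => j _; have le_jm : (j <= m)%N by rewrite -ltnS.
have bin_down : ((m - j).+1)%:R * ('C(m.+1, j))%:R = (m.+1)%:R * ('C(m, j))%:R :> R.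
  by rewrite -subSn // -!natrM -mul_bin_down.
rewrite /binomial_pmf subSn // exprS.
transitivity ((m - j).+1%:R * ('C(m.+1, j))%:R * (e ^+ j * (1 - e) ^+ (m - j) * (1 - e))).
  ring.
rewrite bin_down; ring.
Qed.

Lemma one_sub_eps_p (R : realFieldType) (n k : nat) (e : R) :
  1 - eps_p n k e = \sum_(0 <= j < (n - k).+1) binomial_pmf n e j.
Proof.
rewrite -(sum_binomial_pmf _ n e) (@big_cat_nat _ _ _ (n - k).+1) //=.
  by rewrite addrK.
by rewrite ltnS leq_subr.
Qed.

Lemma one_sub_eps_p_gt0 (R : realFieldType) (n k : nat) (e : R) :
  0 <= e < 1 -> 0 < 1 - eps_p n k e.
Proof.
move=> /andP[e_ge0 e_lt1]; rewrite one_sub_eps_p big_nat_recl //.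
apply: ltr_wpDr.
  by apply: sumr_ge0 => j _; apply: binomial_pmf_ge0; rewrite e_ge0 ltW.
by rewrite /binomial_pmf bin0 subn0 expr0 mulr1 mul1r exprn_gt0 // subr_gt0.
Qed.

Lemma markov_successes (R : realFieldType) (n k : nat) (e : R) :
  (k <= n)%N -> 0 <= e <= 1 -> k%:R * (1 - eps_p n k e) <= n%:R * (1 - e).
Proof.
move=> le_kn e01; have pmf_ge0 j := @binomial_pmf_ge0 R n j e e01.
have le_split : ((n - k).+1 <= n.+1)%N by rewrite ltnS leq_subr.
rewrite one_sub_eps_p -binomial_mean_successes [leRHS](@big_cat_nat _ _ _ (n - k).+1) //=.
apply: ler_wpDr; first by apply: sumr_ge0 => j _; rewrite mulr_ge0 ?ler0n.
rewrite mulr_sumr; apply: ler_sum_nat => j /andP[_ lt_j].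
by rewrite ler_wpM2r // ler_nat; lia.
Qed.

Theorem theorem1 (R : realFieldType) (k_p k_s n_s : nat) (eps_s : R) :
  (0 < k_p)%N -> (0 < k_s)%N -> (0 < n_s)%N -> (k_s <= n_s)%N ->
  0 <= eps_s -> eps_s < 1 ->
  ET_IIR k_p k_s eps_s <= ET_FR k_p k_s n_s eps_s.
Proof.
move=> _ _ _ le_kn e_ge0 e_lt1.
have s_gt0 : 0 < 1 - eps_s by rewrite subr_gt0.
have p_gt0 : 0 < 1 - eps_p n_s k_s eps_s by rewrite one_sub_eps_p_gt0 ?e_ge0.
rewrite /ET_IIR /ET_FR ler_pdivlMr // mulrAC ler_pdivrMr //.
by rewrite !natrM -!mulrA ler_wpM2l ?ler0n ?markov_successes ?e_ge0 ?ltW.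
Qed.
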